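(* Let $\mathcal{A}=M_{n_1}\oplus\cdots\oplus M_{n_d}$, viewed as the block-diagonal subalgebra of $M_m$ with $m=n_1+\cdots+n_d$, let $\tau$ be a completely positive map on $\mathcal{A}$, and let $\widetilde{\tau}$ be its canonical extension to $M_m$. Then $\tau$ is irreducible if and only if $\widetilde{\tau}$ is irreducible. Moreover, $r(\tau)=r(\widetilde{\tau})$.
   Context: The canonical extension is $\widetilde{\tau}=\iota\circ\tau\circ\phi$, where $\iota:\mathcal{A}\hookrightarrow M_m$ is the block-diagonal embedding and $\phi:M_m\to\mathcal{A}$ sends a block matrix $X=(X_{ij})$ (blocks of sizes $n_i\times n_j$) to its block-diagonal part $X_{11}\oplus\cdots\oplus X_{dd}$. A positive map $\varphi$ on a finite dimensional $C^*$-algebra $\mathcal{B}$ is irreducible if there is no projection $p\in\mathcal{B}$ with $p\ne0,1$ such that $\varphi(p\mathcal{B}p)\subseteq p\mathcal{B}p$. $r(\cdot)$ denotes spectral radius. *)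

From HB Require Import structures.
From mathcomp Require Import all_boot all_order all_algebra.
Set Implicit Arguments. Unset Strict Implicit. Unset Printing Implicit Defensive.
Import Order.TTheory GRing.Theory Num.Theory.
Local Open Scope ring_scope.

Definition adjmx (C : numClosedFieldType) (p q : nat) (M : 'M[C]_(p, q)) : 'M[C]_(q, p) :=
  (map_mx Num.conj M)^T.

Definition psd (C : numClosedFieldType) (N : nat) (M : 'M[C]_N) : Prop :=
  exists B : 'M[C]_N, M = adjmx B *m B.

Definition is_proj (C : numClosedFieldType) (N : nat) (P : 'M[C]_N) : Prop :=
  P = adjmx P /\ P *m P = P.

Section Blocks.
Variables (C : numClosedFieldType) (d : nat) (n : 'I_d -> nat).
Local Notation m := (\sum_(i < d) n i)%N.

Definition inA (X : 'M[C]_m) : Prop :=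
  exists B : forall i : 'I_d, 'M[C]_(n i), X = mxdiag B.

(* iota o phi : keep the diagonal blocks only *)
Definition diagpart (X : 'M[C]_m) : 'M[C]_m :=
  mxdiag (fun i : 'I_d => submxblock X i i).

Definition canon_ext (tau : 'M[C]_m -> 'M[C]_m) : 'M[C]_m -> 'M[C]_m :=
  fun X => tau (diagpart X).

Definition maps_A (tau : 'M[C]_m -> 'M[C]_m) : Prop :=
  forall X, inA X -> inA (tau X).

(* complete positivity on A: for every k, id_k (x) tau maps positive elements
   of M_k(A) (seen inside M_k(M_m)) to positive elements *)
Definition cp_on_A (tau : 'M[C]_m -> 'M[C]_m) : Prop :=
  forall (k : nat) (X : 'I_k -> 'I_k -> 'M[C]_m),
    (forall a b, inA (X a b)) ->
    psd (mxblock (p_ := fun _ : 'I_k => m) (q_ := fun _ : 'I_k => m) X) ->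
    psd (mxblock (p_ := fun _ : 'I_k => m) (q_ := fun _ : 'I_k => m)
                 (fun a b => tau (X a b))).
End Blocks.

Section OnSubalg.
Variables (C : numClosedFieldType) (N : nat) (S : 'M[C]_N -> Prop).

Definition irreducible_on (f : 'M[C]_N -> 'M[C]_N) : Prop :=
  ~ exists P : 'M[C]_N,
      [/\ S P, is_proj P, P <> 0, P <> 1%:M &
          forall X, S X -> exists Y, S Y /\ f (P *m X *m P) = P *m Y *m P].

Definition eigenvalue_on (f : 'M[C]_N -> 'M[C]_N) (l : C) : Prop :=
  exists X : 'M[C]_N, [/\ S X, X <> 0 & f X = l *: X].

Definition spectral_radius_is (f : 'M[C]_N -> 'M[C]_N) (r : C) : Prop :=
  (exists l, eigenvalue_on f l /\ `|l| = r) /\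
  (forall l, eigenvalue_on f l -> `|l| <= r).
End OnSubalg.

Definition whole (C : numClosedFieldType) (N : nat) : 'M[C]_N -> Prop := fun _ => True.

From Pilot Require Import Defs.
From HB Require Import structures.
From mathcomp Require Import all_boot all_order all_algebra.
From mathcomp Require Import ring.
Set Implicit Arguments. Unset Strict Implicit. Unset Printing Implicit Defensive.
Import Order.TTheory GRing.Theory Num.Theory.
Local Open Scope ring_scope.

(* A projection Q of A reduces a map tau that is positive on A as soon as
   tau(Q) <= c Q for some c >= 0: every positive element of the corner QAQ lies
   below a multiple of Q, hence so does its image, and by polarisation QAQ is
   spanned by its positive elements.

   Let P <> 0, 1 reduce the extension tau o phi and let D = phi(P).  Then
   tau(D) = P tau(D) P <= c P, and applying the positive map phi, which fixes
   tau(D), gives tau(D) <= c D.  So the support projection Q of D, which lies in A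
   and is nonzero because a nonzero projection has a nonzero diagonal, satisfies
   tau(Q) <= c tau(D) <= c D <= c Q.  If Q = 1 then 1 <= c D, so tau(1) <= c P and
   the support of tau(1) is a reducing projection lying under P, hence <> 1; if it
   is 0 then tau vanishes on A and every projection of A reduces it.  Conversely a
   reducing projection P of tau reduces the extension as phi(PXP) = P phi(X) P.

   An eigenvector of the extension for a nonzero eigenvalue lies in the range of
   tau, hence in A.  If all eigenvalues of the extension vanish it is nilpotent,
   so some iterate of tau kills 1 and 0 is an eigenvalue of tau on A. *)

Section Adjoint.
Variable C : numClosedFieldType.

Lemma adjmxE p q (M : 'M[C]_(p, q)) i j : adjmx M i j = (M j i)^*.
Proof. by rewrite /adjmx !mxE. Qed.

Lemma adjmxK p q (M : 'M[C]_(p, q)) : adjmx (adjmx M) = M.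
Proof. by apply/matrixP => i j; rewrite !adjmxE conjCK. Qed.

Lemma adjmxM p q r (A : 'M[C]_(p, q)) (B : 'M[C]_(q, r)) :
  adjmx (A *m B) = adjmx B *m adjmx A.
Proof.
apply/matrixP => i j; rewrite adjmxE !mxE rmorph_sum; apply: eq_bigr => k _.
by rewrite !adjmxE rmorphM mulrC.
Qed.

Lemma adjmxD p q (A B : 'M[C]_(p, q)) : adjmx (A + B) = adjmx A + adjmx B.
Proof. by apply/matrixP => i j; rewrite !(adjmxE, mxE) rmorphD. Qed.

Lemma adjmxZ p q a (A : 'M[C]_(p, q)) : adjmx (a *: A) = a^* *: adjmx A.
Proof. by apply/matrixP => i j; rewrite !(adjmxE, mxE) rmorphM. Qed.

Lemma adjmx1 p : adjmx (1%:M : 'M[C]_p) = 1%:M.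
Proof. by apply/matrixP => i j; rewrite !(adjmxE, mxE) eq_sym rmorph_nat. Qed.

Lemma adjmx_diag p (s : 'rV[C]_p) : adjmx (diag_mx s) = diag_mx (\row_j (s 0 j)^*).
Proof.
apply/matrixP => i j; rewrite !(adjmxE, mxE) eq_sym.
by case: eqP => [->|]; rewrite ?mulr1n ?mulr0n ?rmorph0.
Qed.

Local Open Scope sesquilinear_scope.
Lemma adjmx_tr p q (M : 'M[C]_(p, q)) : adjmx M = M ^t*.
Proof. by rewrite /adjmx map_trmx. Qed.
Local Close Scope sesquilinear_scope.

Lemma row_mul_adj_ge0 k (w : 'rV[C]_k) : 0 <= (w *m adjmx w) 0 0.
Proof. by rewrite adjmx_tr -dotmxE dnorm_ge0. Qed.

Lemma row_mul_adj_eq0 k (w : 'rV[C]_k) : (w *m adjmx w) 0 0 = 0 -> w = 0.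
Proof. by rewrite adjmx_tr -dotmxE => /eqP; rewrite dnorm_eq0 => /eqP. Qed.

End Adjoint.

Section Positive.
Variables (C : numClosedFieldType) (N : nat).
Implicit Types (A B M P R X Y : 'M[C]_N) (v : 'rV[C]_N).

Definition herm M := adjmx M = M.
Definition qform M v := (v *m M *m adjmx v) 0 0.
Definition pos M := herm M /\ forall v, 0 <= qform M v.

Lemma qformD A B v : qform (A + B) v = qform A v + qform B v.
Proof. by rewrite /qform mulmxDr mulmxDl mxE. Qed.

Lemma qformZ a A v : qform (a *: A) v = a * qform A v.
Proof. by rewrite /qform -scalemxAr -scalemxAl mxE. Qed.

Lemma qformB A B v : qform (A - B) v = qform A v - qform B v.
Proof. by rewrite -scaleN1r qformD qformZ mulN1r. Qed.

Lemma qform_adj_mul B v :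
  qform (adjmx B *m B) v = (v *m adjmx B *m adjmx (v *m adjmx B)) 0 0.
Proof. by rewrite /qform adjmxM adjmxK !mulmxA. Qed.

Lemma psd_pos M : psd M -> pos M.
Proof.
move=> [B ->]; split; first by rewrite /herm adjmxM adjmxK.
by move=> v; rewrite qform_adj_mul row_mul_adj_ge0.
Qed.

Lemma proj_pos P : is_proj P -> pos P.
Proof. by move=> [eP PP]; apply: psd_pos; exists P; rewrite -eP PP. Qed.

Lemma pos1 : pos 1%:M.
Proof. by apply: psd_pos; exists 1%:M; rewrite adjmx1 mulmx1. Qed.

Lemma posD A B : pos A -> pos B -> pos (A + B).
Proof.
move=> [hA pA] [hB pB]; split; first by rewrite /herm adjmxD hA hB.
by move=> v; rewrite qformD addr_ge0.
Qed.

Lemma posZ c A : 0 <= c -> pos A -> pos (c *: A).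
Proof.
move=> c0 [hA pA]; split; last by move=> v; rewrite qformZ mulr_ge0.
by rewrite /herm adjmxZ hA conj_Creal // ger0_real.
Qed.

Lemma pos0 : pos 0.
Proof. by have := posZ (lexx 0) pos1; rewrite scale0r. Qed.

Lemma pos_sum (I : finType) (F : I -> 'M[C]_N) : (forall i, pos (F i)) -> pos (\sum_i F i).
Proof. by move=> Fpos; apply: (big_ind pos) => //; [exact: pos0 | exact: posD]. Qed.

Lemma pos_adj_conj A B : pos A -> pos (adjmx B *m A *m B).
Proof.
move=> [hA pA]; split; first by rewrite /herm !adjmxM adjmxK hA mulmxA.
by move=> v; have := pA (v *m adjmx B); rewrite /qform adjmxM adjmxK !mulmxA.
Qed.

Lemma pos_proj_conj P A : is_proj P -> pos A -> pos (P *m A *m P).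
Proof. by move=> [eP _] /(pos_adj_conj P); rewrite -eP. Qed.

Lemma hermitian_spectral M : herm M -> exists (U : 'M[C]_N) (s : 'rV[C]_N),
  [/\ U *m adjmx U = 1%:M, adjmx U *m U = 1%:M & M = adjmx U *m diag_mx s *m U].
Proof.
move=> hM; have nM : M \is normalmx by apply/normalmxP; rewrite -adjmx_tr hM.
have Uu := spectral_unitarymx M.
exists (spectralmx M), (spectral_diag M); rewrite !adjmx_tr; split.
- exact/unitarymxP.
- by rewrite -invmx_unitary // mulVmx // unitarymx_unit.
- by rewrite -invmx_unitary //; exact: orthomx_spectralP.
Qed.

Definition udiag (U : 'M[C]_N) (f : 'I_N -> C) := adjmx U *m diag_mx (\row_j f j) *m U.

Lemma eq_udiag U f g : f =1 g -> udiag U f = udiag U g.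
Proof.
by move=> fg; rewrite /udiag; congr (_ *m diag_mx _ *m _); apply/rowP => j; rewrite !mxE fg.
Qed.

Lemma udiagZB U a f g : a *: udiag U f - udiag U g = udiag U (fun j => a * f j - g j).
Proof.
rewrite /udiag scalemxAl scalemxAr -mulmxBl -mulmxBr -linearZ -linearB /=.
by congr (_ *m diag_mx _ *m _); apply/rowP => j; rewrite !mxE.
Qed.

Lemma udiagM U f g :
  U *m adjmx U = 1%:M -> udiag U f *m udiag U g = udiag U (fun j => f j * g j).
Proof.
move=> HU; rewrite /udiag !mulmxA -[_ *m U *m adjmx U]mulmxA HU mulmx1.
rewrite -[_ *m diag_mx _ *m diag_mx _]mulmxA mulmx_diag.
by congr (_ *m diag_mx _ *m _); apply/rowP => j; rewrite !mxE.
Qed.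

Lemma udiag1 U : adjmx U *m U = 1%:M -> udiag U (fun=> 1) = 1%:M.
Proof.
move=> HU; rewrite /udiag (_ : \row_j 1 = const_mx 1); last by apply/rowP => j; rewrite !mxE.
by rewrite diag_const_mx mulmx1.
Qed.

Lemma udiag_psd U f : (forall j, 0 <= f j) -> psd (udiag U f).
Proof.
move=> f0; exists (diag_mx (\row_j sqrtC (f j)) *m U).
rewrite adjmxM adjmx_diag mulmxA -[_ *m diag_mx _ *m diag_mx _]mulmxA mulmx_diag.
congr (_ *m diag_mx _ *m _); apply/rowP => j; rewrite !mxE.
by rewrite conj_Creal ?ger0_real ?sqrtC_ge0 // -expr2 sqrtCK.
Qed.

Lemma udiag_pos U f : (forall j, 0 <= f j) -> pos (udiag U f).
Proof. by move=> f0; apply/psd_pos/udiag_psd. Qed.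

Lemma pos_spectral M : pos M -> exists (U : 'M[C]_N) (f : 'I_N -> C),
  [/\ U *m adjmx U = 1%:M, adjmx U *m U = 1%:M, forall j, 0 <= f j & M = udiag U f].
Proof.
move=> [hM pM]; have [U [s [H1 H2 HM]]] := hermitian_spectral hM.
exists U, (fun j => s 0 j); split => //; last first.
  by rewrite HM /udiag; congr (_ *m diag_mx _ *m _); apply/rowP => j; rewrite !mxE.
move=> j; have := pM (delta_mx 0 j *m U).
rewrite /qform HM adjmxM !mulmxA -[_ *m U *m adjmx U]mulmxA H1 mulmx1.
rewrite -[_ *m U *m adjmx U]mulmxA H1 mulmx1 mul_mx_diag mxE (bigD1 j) //= big1 ?addr0.
  by rewrite !mxE !eqxx /= mul1r conjC1 mulr1.
by move=> k /negPf nkj; rewrite !mxE nkj /= !mul0r.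
Qed.

Lemma pos_psd M : pos M -> psd M.
Proof. by move=> /pos_spectral [U [f [_ _ f0 ->]]]; apply: udiag_psd. Qed.

Lemma pos_qform_eq0 M v : pos M -> qform M v = 0 -> v *m M = 0.
Proof.
move=> /pos_psd [B ->]; rewrite qform_adj_mul => /row_mul_adj_eq0 vB0.
by rewrite mulmxA vB0 mul0mx.
Qed.

Definition dominated X R := exists2 c : C, 0 <= c & pos (c *: R - X).

Lemma dominated_trans X Y R : dominated X Y -> dominated Y R -> dominated X R.
Proof.
move=> [c1 c10 h1] [c2 c20 h2]; exists (c1 * c2); first exact: mulr_ge0.
have -> : (c1 * c2) *: R - X = c1 *: (c2 *: R - Y) + (c1 *: Y - X).
  by rewrite scalerBr scalerA addrA subrK.
by apply: posD => //; apply: posZ.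
Qed.

Lemma dominated0 R : pos R -> dominated 0 R.
Proof. by exists 1; rewrite ?scale1r ?subr0. Qed.

Lemma dominated_ker (K : 'M[C]_N) X R :
  pos X -> dominated X R -> K *m R = 0 -> K *m X = 0.
Proof.
move=> pX [c _ [_ pRX]] KR; apply/row_matrixP => i; rewrite row0 row_mul.
apply: pos_qform_eq0 => //; set v := row i K.
have vR : v *m R = 0 by rewrite /v -row_mul KR row0.
have := pRX v; rewrite qformB qformZ {1}/qform vR mul0mx mxE mulr0 sub0r oppr_ge0 => h.
by apply/eqP; rewrite eq_le h; case: pX => _ ->.
Qed.

Lemma dominated_eq0 X : pos X -> dominated X 0 -> X = 0.
Proof. by move=> pX X0; rewrite -[X]mul1mx (dominated_ker pX X0 (mulmx0 _ _)). Qed.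

Lemma pos_dominated1 X : pos X -> dominated X 1%:M.
Proof.
move=> /pos_spectral [U [f [H1 H2 f0 ->]]].
exists (\sum_j f j); first exact: sumr_ge0.
rewrite -(udiag1 H2) udiagZB; apply: udiag_pos => j; rewrite mulr1 subr_ge0.
by rewrite (bigD1 j) //= lerDl sumr_ge0.
Qed.

Lemma herm_proj_fix P X : is_proj P -> herm X -> P *m X = X -> P *m X *m P = X.
Proof. by move=> [eP _] hX PX; rewrite PX -[in LHS]hX {1}eP -adjmxM PX hX. Qed.

Lemma dominated_projP P X : is_proj P -> pos X -> dominated X P <-> P *m X = X.
Proof.
move=> Pproj pX; split => [XP | PX].
  apply/eqP; rewrite -subr_eq0 -{2}[X]mul1mx -mulmxBl; apply/eqP.
  by apply: (dominated_ker pX XP); rewrite mulmxBl mul1mx Pproj.2 subrr.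
have [c c0 pc] := pos_dominated1 pX; exists c => //.
have := pos_proj_conj Pproj pc.
rewrite mulmxBr mulmxBl (herm_proj_fix Pproj pX.1 PX).
by rewrite -scalemxAr mulmx1 -scalemxAl Pproj.2.
Qed.

Lemma support_proj S : pos S -> exists Q W,
  [/\ is_proj Q, Q *m S = S, Q = W *m S & dominated Q S].
Proof.
move=> /pos_spectral [U [f [H1 H2 f0 ->]]].
pose J j : C := (f j != 0)%:R.
have JJ j : J j * J j = J j by rewrite /J; case: (f j != 0); rewrite ?mulr1 ?mulr0.
have Jf j : J j * f j = f j by rewrite /J; case: eqP => [->|]; rewrite ?mulr0 ?mul1r.
have fVf j : (f j)^-1 * f j = J j.
  by rewrite /J; case: eqP => [->|/eqP fj0]; rewrite ?invr0 ?mulr0 ?mulVf.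
exists (udiag U J), (udiag U (fun j => (f j)^-1)); split.
- split; last by rewrite udiagM //; apply: eq_udiag.
  by have [hJ _] := udiag_pos U (f := J) (fun j => ler0n _ _); rewrite hJ.
- by rewrite udiagM //; apply: eq_udiag.
- by rewrite udiagM //; apply: eq_udiag => j; rewrite fVf.
exists (\sum_j (f j)^-1); first by apply: sumr_ge0 => j _; rewrite invr_ge0.
rewrite udiagZB; apply: udiag_pos => j; rewrite /J subr_ge0.
case: eqP => [->|/eqP h]; first by rewrite mulr0.
rewrite (bigD1 j) //= mulrDl mulVf // lerDl mulr_ge0 // sumr_ge0 // => k _.
by rewrite invr_ge0.
Qed.

Lemma proj_dim_gt1 P : is_proj P -> P <> 0 -> P <> 1%:M -> (1 < N)%N.
Proof.
move=> [_ PP] P0 P1.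
have rP_gt0 : (0 < \rank P)%N by rewrite lt0n mxrank_eq0; apply/eqP.
suff rP_ltN : (\rank P < N)%N by apply: leq_ltn_trans rP_gt0 rP_ltN.
rewrite ltn_neqAle rank_leq_row andbT; apply/eqP => rPN; apply: P1.
have Pu : P \in unitmx by rewrite -row_free_unit /row_free rPN.
by rewrite -(mulKmx Pu P) PP mulVmx.
Qed.

End Positive.

Arguments pos1 {C N}.

Section Blocks.
Variables (C : numClosedFieldType) (d : nat) (n : 'I_d -> nat).
Local Notation m := (\sum_(i < d) n i)%N.
Local Notation blk := (@tagnat.sig1 d n).
Local Notation inA := (@inA C d n).
Local Notation diagpart := (@diagpart C d n).
Implicit Types P Q R S X Y : 'M[C]_m.

Lemma diagpartE X s t : diagpart X s t = if blk s == blk t then X s t else 0.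
Proof.
rewrite /Defs.diagpart /mxdiag mxE; case: eqP => e; last by rewrite mxE.
rewrite /submxblock.
move: (tagnat.sig2 s) (tagnat.sig2 t) (tagnat.sig2K s) (tagnat.sig2K t).
move: (blk t) e => k e; case: k / e => a b Ha Hb.
by rewrite conform_mx_id mxE Ha Hb.
Qed.

Fact diagpart_is_linear : linear diagpart.
Proof.
move=> a X Y; apply/matrixP => s t; rewrite !(diagpartE, mxE).
by case: ifP; rewrite ?mulr0 ?addr0.
Qed.
HB.instance Definition _ :=
  GRing.isLinear.Build C 'M[C]_m 'M[C]_m *:%R diagpart diagpart_is_linear.

Lemma inAE X : inA X <-> (forall s t, blk s != blk t -> X s t = 0).
Proof.
split=> [[B ->] s t /negPf h | X0]; first by rewrite /mxdiag mxE h mxE.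
exists (fun i => submxblock X i i); apply/matrixP => s t.
by have := diagpartE X s t; rewrite /Defs.diagpart => ->; case: eqP => // /eqP /X0 ->.
Qed.

Definition blockproj (k : 'I_d) : 'M[C]_m := diag_mx (\row_s (blk s == k)%:R).

Lemma blockproj_herm k : herm (blockproj k).
Proof.
by rewrite /herm adjmx_diag; congr diag_mx; apply/rowP => s; rewrite !mxE rmorph_nat.
Qed.

Lemma mul_blockproj_mx k X : blockproj k *m X = \matrix_(s, t) ((blk s == k)%:R * X s t).
Proof. by rewrite /blockproj mul_diag_mx; apply/matrixP => s t; rewrite !mxE. Qed.

Lemma mul_mx_blockproj k X : X *m blockproj k = \matrix_(s, t) (X s t * (blk t == k)%:R).
Proof. by rewrite /blockproj mul_mx_diag; apply/matrixP => s t; rewrite !mxE. Qed.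

Lemma inA_blockprojP X : inA X <-> (forall k, blockproj k *m X = X *m blockproj k).
Proof.
rewrite inAE; split => [X0 k | XE s t ne].
  rewrite mul_blockproj_mx mul_mx_blockproj; apply/matrixP => s t; rewrite !mxE.
  have [e|ne] := eqVneq (blk s) (blk t); first by rewrite e mulrC.
  by rewrite X0 // mulr0 mul0r.
have /matrixP /(_ s t) := XE (blk s).
by rewrite mul_blockproj_mx mul_mx_blockproj !mxE eqxx mul1r eq_sym (negPf ne) mulr0.
Qed.

Lemma diagpart_blockproj X : diagpart X = \sum_k blockproj k *m X *m blockproj k.
Proof.
apply/matrixP => s t; rewrite diagpartE summxE [RHS](bigD1 (blk s)) //= [F in _ + F]big1.
  rewrite addr0 mul_mx_blockproj mul_blockproj_mx !mxE eqxx mul1r.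
  by have [_|_] := eqVneq (blk s) (blk t); rewrite ?mulr1 ?mulr0.
by move=> k /negPf nk; rewrite mul_mx_blockproj mul_blockproj_mx !mxE eq_sym nk !mul0r.
Qed.

Lemma inA1 : inA 1%:M.
Proof. by apply/inA_blockprojP => k; rewrite mulmx1 mul1mx. Qed.

Lemma inAD X Y : inA X -> inA Y -> inA (X + Y).
Proof.
move=> /inA_blockprojP hX /inA_blockprojP hY; apply/inA_blockprojP => k.
by rewrite mulmxDr mulmxDl hX hY.
Qed.

Lemma inAB X Y : inA X -> inA Y -> inA (X - Y).
Proof.
move=> /inA_blockprojP hX /inA_blockprojP hY; apply/inA_blockprojP => k.
by rewrite mulmxBr mulmxBl hX hY.
Qed.

Lemma inAZ a X : inA X -> inA (a *: X).
Proof.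
move=> /inA_blockprojP hX; apply/inA_blockprojP => k.
by rewrite -scalemxAl -scalemxAr hX.
Qed.

Lemma inAM X Y : inA X -> inA Y -> inA (X *m Y).
Proof.
move=> /inA_blockprojP hX /inA_blockprojP hY; apply/inA_blockprojP => k.
by rewrite mulmxA hX -mulmxA hY mulmxA.
Qed.

Lemma inA_adj X : inA X -> inA (adjmx X).
Proof.
move=> /inA_blockprojP hX; apply/inA_blockprojP => k.
by rewrite -{1}(blockproj_herm k) -adjmxM -hX adjmxM blockproj_herm.
Qed.

Lemma inA_diagpart X : inA (diagpart X).
Proof.
apply/inAE => s t /negPf ne; by rewrite diagpartE ne.
Qed.

Lemma diagpart_id X : inA X -> diagpart X = X.
Proof.
move=> /inAE X0; apply/matrixP => s t; rewrite diagpartE.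
by case: eqVneq => // /X0 ->.
Qed.

Lemma diagpart_conj Q X : inA Q -> diagpart (Q *m X *m Q) = Q *m diagpart X *m Q.
Proof.
move=> /inA_blockprojP hQ; rewrite !diagpart_blockproj mulmx_sumr mulmx_suml.
by apply: eq_bigr => k _; rewrite !mulmxA hQ -!mulmxA hQ.
Qed.

Lemma pos_diagpart X : pos X -> pos (diagpart X).
Proof.
move=> pX; rewrite diagpart_blockproj; apply: pos_sum => k.
by have := pos_adj_conj (blockproj k) pX; rewrite blockproj_herm.
Qed.

Lemma dominated_diagpart X R : inA X -> dominated X R -> dominated X (diagpart R).
Proof.
move=> AX [c c0 pc]; exists c => //.
by have := pos_diagpart pc; rewrite linearB linearZ /= (diagpart_id AX).
Qed.

Lemma diagpart_proj_neq0 P : is_proj P -> P <> 0 -> diagpart P <> 0.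
Proof.
move=> [eP PP] P0 D0; apply: P0; apply/row_matrixP => s; rewrite row0.
apply: row_mul_adj_eq0.
have -> : (row s P *m adjmx (row s P)) 0 0 = (P *m adjmx P) s s.
  by rewrite !mxE; apply: eq_bigr => k _; rewrite !(adjmxE, mxE).
by rewrite -eP PP; have /matrixP/(_ s s) := D0; rewrite diagpartE eqxx mxE.
Qed.

Lemma inA_support_proj S : inA S -> pos S ->
  exists Q, [/\ inA Q, is_proj Q, dominated S Q & dominated Q S].
Proof.
move=> /inA_blockprojP SE pS; have [Q [W [Qproj QS QW QSd]]] := support_proj pS.
exists Q; split => //; last exact/dominated_projP.
apply/inA_blockprojP => k; set E := blockproj k.
have ES : E *m Q = S *m (E *m adjmx W).
  by rewrite {1}Qproj.1 QW adjmxM pS.1 mulmxA SE -mulmxA.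
have e1 : E *m Q = Q *m E *m Q by rewrite -mulmxA ES [Q *m (S *m _)]mulmxA QS.
have e2 : Q *m E = Q *m E *m Q.
  by have := congr1 (@adjmx C m m) e1; rewrite !adjmxM -Qproj.1 blockproj_herm mulmxA.
by rewrite e1 -e2.
Qed.

Lemma inA_nontrivial_proj P : is_proj P -> P <> 0 -> P <> 1%:M ->
  exists E, [/\ inA E, is_proj E, E <> 0 & E <> 1%:M].
Proof.
move=> Pproj P0 P1; have m_gt1 := proj_dim_gt1 Pproj P0 P1.
pose s0 : 'I_m := Ordinal (ltnW m_gt1); pose s1 : 'I_m := Ordinal m_gt1.
exists (delta_mx s0 s0); split.
- apply/inAE => s t; rewrite mxE.
  by have [->|] := eqVneq s s0; have [->|] := eqVneq t s0; rewrite ?eqxx.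
- split; last by rewrite mul_delta_mx.
  by apply/matrixP => i j; rewrite !(adjmxE, mxE) conjC_nat andbC.
- by move/matrixP/(_ s0 s0); rewrite !mxE eqxx => /eqP; rewrite oner_eq0.
- by move/matrixP/(_ s1 s1); rewrite !mxE eqxx andbb => /eqP; rewrite eqr_nat.
Qed.

End Blocks.

Arguments inA1 {C d n}.

Lemma linear_polarization (C : numClosedFieldType) N N'
    (f g : {linear 'M[C]_N -> 'M[C]_N'}) X :
  (forall a : C, f (adjmx (1%:M + a *: X) *m (1%:M + a *: X)) =
                 g (adjmx (1%:M + a *: X) *m (1%:M + a *: X))) ->
  f X = g X.
Proof.
move=> fg; pose Z a := adjmx (1%:M + a *: X) *m (1%:M + a *: X).
have Z_expand a : a^* * a = 1 -> Z a = 1%:M + a *: X + a^* *: adjmx X + adjmx X *m X.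
  move=> a1; rewrite /Z adjmxD adjmx1 adjmxZ mulmxDl !mul1mx mulmxDr mulmx1.
  by rewrite -scalemxAl -scalemxAr scalerA a1 scale1r !addrA.
have conjNi : (- 'i : C)^* = 'i by apply: (canLR (@conjCK C)); rewrite conjCi.
have polar : 4 *: X = Z 1 - Z (-1) + (- 'i) *: Z 'i + 'i *: Z (- 'i).
  rewrite !Z_expand ?conjNi ?conjCi ?rmorphN1 ?conjC1 //;
    rewrite ?mulrNN ?mulNr ?mulrN ?mulCii ?opprK ?mulr1 //.
  move: (adjmx X *m X) (adjmx X) => W Y; apply/matrixP => s t; rewrite !mxE.
  move: (X s t) (Y s t) (W s t) => x y w.
  apply/eqP; rewrite -subr_eq0; apply/eqP.
  (* [ring] does not know ['i ^+ 2 = -1]: factor it out first. *)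
  transitivity (('i ^+ 2 + 1) * (2 * x - 2 * y) : C); first ring.
  by rewrite sqrCi addNr mul0r.
have n4 : (4 : C) != 0 by rewrite pnatr_eq0.
by apply: (scalerI n4); rewrite -!linearZZ polar !linearD !linearN !linearZZ !fg.
Qed.

Lemma psd_castmx (C : numClosedFieldType) N1 N2 (e : N1 = N2) (M : 'M[C]_N1) :
  psd (castmx (e, e) M) <-> psd M.
Proof. by case: N2 / e; rewrite castmx_id. Qed.

Lemma psd_mxblock1 (C : numClosedFieldType) N (M : 'M[C]_N) :
  psd (\mxblock_(i < 1, j < 1) M) <-> psd M.
Proof. by rewrite [X in _ <-> psd X]mxEmxblock psd_castmx. Qed.

Lemma cp_on_A_pos (C : numClosedFieldType) d (n : 'I_d -> nat) tau :
  @cp_on_A C d n tau -> forall X, @inA C d n X -> pos X -> pos (tau X).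
Proof.
move=> tau_cp X AX pX; apply/psd_pos/psd_mxblock1.
by apply: (tau_cp 1%N (fun _ _ => X)) => //; apply/psd_mxblock1/pos_psd.
Qed.

Definition corner_invariant (C : numClosedFieldType) N (S : 'M[C]_N -> Prop)
    (f : 'M[C]_N -> 'M[C]_N) (P : 'M[C]_N) :=
  forall X, S X -> exists Y, S Y /\ f (P *m X *m P) = P *m Y *m P.

Section Reduction.
Variables (C : numClosedFieldType) (d : nat) (n : 'I_d -> nat).
Local Notation m := (\sum_(i < d) n i)%N.
Local Notation inA := (@inA C d n).
Local Notation diagpart := (@diagpart C d n).
Variable tau : {linear 'M[C]_m -> 'M[C]_m}.
Hypothesis tauA : maps_A tau.
Hypothesis tau_pos : forall X, inA X -> pos X -> pos (tau X).
Implicit Types P Q R X Z : 'M[C]_m.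

Lemma dominated_tau X R : inA X -> inA R -> dominated X R -> dominated (tau X) (tau R).
Proof.
move=> AX AR [c c0 pc]; exists c => //.
by have := tau_pos (inAB (inAZ c AR) AX) pc; rewrite linearB linearZ.
Qed.

Lemma dominated_tau1 Z : inA Z -> pos Z -> dominated (tau Z) (tau 1%:M).
Proof. by move=> AZ /pos_dominated1; apply: dominated_tau inA1. Qed.

Lemma corner_invariant_dominated Q :
  inA Q -> is_proj Q -> dominated (tau Q) Q -> corner_invariant inA tau Q.
Proof.
move=> AQ Qproj tQ_Q X AX; exists (tau (Q *m X *m Q)).
split; first exact/tauA/inAM/AQ/inAM.
pose cQ := mulmxr Q \o mulmx Q.
apply: (linear_polarization (f := tau \o cQ) (g := cQ \o tau \o cQ)) => a /=.
set B := 1%:M + a *: X; set Z := Q *m (adjmx B *m B) *m Q.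
have AB : inA B := inAD inA1 (inAZ a AX).
have AZ : inA Z := inAM (inAM AQ (inAM (inA_adj AB) AB)) AQ.
have pZ : pos Z by apply/(pos_proj_conj Qproj)/psd_pos; exists B.
have ZQ : dominated Z Q by apply/(dominated_projP Qproj pZ); rewrite /Z !mulmxA Qproj.2.
have QtZ : Q *m tau Z = tau Z.
  apply/(dominated_projP Qproj (tau_pos AZ pZ)).
  exact: dominated_trans (dominated_tau AZ AQ ZQ) tQ_Q.
by rewrite (herm_proj_fix Qproj (tau_pos AZ pZ).1 QtZ).
Qed.

Lemma corner_invariant_canon_ext P :
  inA P -> corner_invariant inA tau P -> corner_invariant (@whole C m) (canon_ext tau) P.
Proof.
move=> AP Pinv X _; have [Y [AY eY]] := Pinv _ (inA_diagpart X).
by exists Y; split => //; rewrite /canon_ext diagpart_conj.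
Qed.

Lemma canon_ext_dominated P : is_proj P ->
  corner_invariant (@whole C m) (canon_ext tau) P -> dominated (tau (diagpart P)) P.
Proof.
move=> Pproj Pinv; have [Y [_]] := Pinv 1%:M I.
have pT := tau_pos (inA_diagpart P) (pos_diagpart (proj_pos Pproj)).
rewrite /canon_ext mulmx1 Pproj.2 => eT; apply/(dominated_projP Pproj pT).
by rewrite eT !mulmxA Pproj.2.
Qed.

Lemma reducible_tau1_dominated P : is_proj P -> P <> 0 -> P <> 1%:M ->
  dominated (tau 1%:M) P ->
  exists Q, [/\ inA Q, is_proj Q, Q <> 0, Q <> 1%:M & corner_invariant inA tau Q].
Proof.
move=> Pproj P0 P1 t1P.
have [Q [AQ Qproj t1Q Qt1]] := inA_support_proj (tauA inA1) (tau_pos inA1 pos1).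
have tau_Q R : inA R -> pos R -> dominated (tau R) Q.
  by move=> AR pR; apply: dominated_trans (dominated_tau1 AR pR) t1Q.
have [Q0|Q_neq0] := eqVneq Q 0; last first.
  exists Q; split => //; first exact/eqP.
    move=> Q1; apply: P1; have := dominated_trans Qt1 t1P; rewrite Q1.
    by move/(dominated_projP Pproj pos1); rewrite mulmx1.
  exact/corner_invariant_dominated/tau_Q/proj_pos.
have [E [AE Eproj E0 E1]] := inA_nontrivial_proj Pproj P0 P1.
exists E; split => //; apply: corner_invariant_dominated => //.
apply: (dominated_trans _ (dominated0 (proj_pos Eproj))).
by rewrite -Q0; apply: tau_Q => //; apply: proj_pos.
Qed.

Lemma reducible_canon_ext P : is_proj P -> P <> 0 -> P <> 1%:M ->
  corner_invariant (@whole C m) (canon_ext tau) P ->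
  exists Q, [/\ inA Q, is_proj Q, Q <> 0, Q <> 1%:M & corner_invariant inA tau Q].
Proof.
move=> Pproj P0 P1 /(canon_ext_dominated Pproj) tD_P.
have AD := inA_diagpart P; have pD := pos_diagpart (proj_pos Pproj).
have [Q [AQ Qproj DQ QD]] := inA_support_proj AD pD.
have [Q1|Q_neq1] := eqVneq Q 1%:M.
  apply: (reducible_tau1_dominated Pproj P0 P1); rewrite Q1 in QD.
  exact: dominated_trans (dominated_tau inA1 AD QD) tD_P.
exists Q; split => //; last first.
  apply: corner_invariant_dominated => //; apply: (dominated_trans _ DQ).
  apply: dominated_diagpart (tauA AQ) _.
  exact: dominated_trans (dominated_tau AQ AD QD) tD_P.
- by apply/eqP.
- move=> Q0; apply: (diagpart_proj_neq0 Pproj P0).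
  by apply: dominated_eq0 pD _; rewrite -Q0.
Qed.

Lemma irreducible_canon_ext :
  irreducible_on inA tau <-> irreducible_on (@whole C m) (canon_ext tau).
Proof.
split=> irr [P [SP Pproj P0 P1 Pinv]]; apply: irr.
  exact: (reducible_canon_ext Pproj P0 P1 Pinv).
by exists P; split => //; apply: corner_invariant_canon_ext.
Qed.

End Reduction.

Lemma eigenvalues0_nilpotent (C : numClosedFieldType) k (M : 'M[C]_k) :
  (forall a, eigenvalue M a -> a = 0) -> exists j, M ^+ j = 0.
Proof.
case: k M => [|k] M eig0; first by exists 0%N; apply/matrixP => [[]].
have [rs char_rs] := closed_field_poly_normal (char_poly M).
rewrite (monicP (char_poly_monic M)) scale1r in char_rs.
have rs0 z : z \in rs -> z = 0.
  by move=> z_rs; apply: eig0; rewrite eigenvalue_root_char char_rs root_prod_XsubC.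
have charX : char_poly M = 'X ^+ size rs.
  rewrite char_rs; elim: rs rs0 {char_rs} => [|z rs IH] rs0; first by rewrite big_nil expr0.
  rewrite big_cons IH => [|y y_rs]; last by apply: rs0; rewrite in_cons y_rs orbT.
  by rewrite (rs0 z (mem_head _ _)) subr0 exprS.
by exists (size rs); have := Cayley_Hamilton M; rewrite charX rmorphXn /= horner_mx_X.
Qed.

Lemma iter_eigenvalues0 (C : numClosedFieldType) N (f : {linear 'M[C]_N -> 'M[C]_N}) :
  (forall a, eigenvalue_on (@whole C N) f a -> a = 0) -> exists j, forall X, iter j f X = 0.
Proof.
move=> eig0; have [|j fj0] := @eigenvalues0_nilpotent C _ (lin_mx f).
  move=> a /eigenvalueP [v vM v0]; apply: eig0; exists (vec_mx v); split => //.
    by move=> v_0; move: v0; rewrite -[v]vec_mxK v_0 linear0 eqxx.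
  by rewrite -[f _]mxvecK -mul_vec_lin vec_mxK vM linearZ.
exists j => X; apply: (can_inj mxvecK); rewrite linear0 -(mulmx0 _ (mxvec X)) -fj0.
by elim: j {fj0} => [|j IH]; rewrite ?mulmx1 // iterS exprSr mulmxA -IH mul_vec_lin.
Qed.

Lemma eigenvalue0_iter (C : numClosedFieldType) N (S : 'M[C]_N -> Prop)
    (f : 'M[C]_N -> 'M[C]_N) j Y :
  (forall X, S X -> S (f X)) -> S Y -> Y <> 0 -> iter j f Y = 0 -> eigenvalue_on S f 0.
Proof.
move=> fS; elim: j Y => [|j IH] Y SY Y0 //; rewrite iterSr.
have [fY0|fY_neq0] := eqVneq (f Y) 0; first by exists Y; rewrite fY0 scale0r.
by apply: IH (fS _ SY) _; apply/eqP.
Qed.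

Section Spectrum.
Variables (C : numClosedFieldType) (d : nat) (n : 'I_d -> nat).
Local Notation m := (\sum_(i < d) n i)%N.
Local Notation inA := (@inA C d n).
Local Notation diagpart := (@diagpart C d n).
Variable tau : {linear 'M[C]_m -> 'M[C]_m}.
Hypothesis tauA : maps_A tau.

Lemma eigenvalue_on_canon_ext l :
  eigenvalue_on inA tau l -> eigenvalue_on (@whole C m) (canon_ext tau) l.
Proof. by move=> [X [AX X0 eX]]; exists X; split => //; rewrite /canon_ext diagpart_id. Qed.

Lemma eigenvalue_on_canon_ext_neq0 l : l != 0 ->
  eigenvalue_on (@whole C m) (canon_ext tau) l -> eigenvalue_on inA tau l.
Proof.
move=> l0 [X [_ X0 eX]]; rewrite /canon_ext in eX.
have AX : inA X.
  by rewrite -[X]scale1r -(mulVf l0) -scalerA -eX; apply/inAZ/tauA/inA_diagpart.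
by exists X; split => //; rewrite -eX diagpart_id.
Qed.

Lemma iter_canon_ext j Y : inA Y -> iter j (canon_ext tau) Y = iter j tau Y.
Proof.
move=> AY; elim: j => [|j IH] //=; rewrite IH /canon_ext diagpart_id //.
by elim: j {IH} => [|j IHj] //=; apply: tauA.
Qed.

Lemma eigenvalue0_canon_ext : 1%:M <> 0 :> 'M[C]_m ->
  (forall a, eigenvalue_on (@whole C m) (canon_ext tau) a -> a = 0) ->
  eigenvalue_on inA tau 0.
Proof.
move=> one_neq0 /(iter_eigenvalues0 (f := tau \o diagpart)) [j itj].
apply: (eigenvalue0_iter (j := j) tauA inA1 one_neq0).
by rewrite -iter_canon_ext ?itj //; apply: inA1.
Qed.

Lemma spectral_radius_canon_ext r :
  spectral_radius_is inA tau r <-> spectral_radius_is (@whole C m) (canon_ext tau) r.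
Proof.
split=> [[[l [el <-]] lmax] | [[l [el <-]] lmax]].
  split; first by exists l; split => //; apply: eigenvalue_on_canon_ext.
  move=> l' el'; have [->|l'0] := eqVneq l' 0; first by rewrite normr0 normr_ge0.
  exact/lmax/eigenvalue_on_canon_ext_neq0.
split; last by move=> l' /eigenvalue_on_canon_ext /lmax.
have [l0|l_neq0] := eqVneq l 0; last first.
  by exists l; split => //; apply: eigenvalue_on_canon_ext_neq0.
exists 0; split; last by rewrite l0.
have [X [_ X0 _]] := el.
apply: eigenvalue0_canon_ext => [e1 | a /lmax]; first by apply: X0; rewrite -[X]mul1mx e1 mul0mx.
by rewrite l0 normr0 normr_le0 => /eqP.
Qed.

End Spectrum.

Unset Implicit Arguments.

Theorem proposition5p9 (C : numClosedFieldType) (d : nat) (n : 'I_d -> nat)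
    (tau : {linear 'M[C]_(\sum_(i < d) n i) -> 'M[C]_(\sum_(i < d) n i)}) :
  @maps_A C d n tau -> @cp_on_A C d n tau ->
  (irreducible_on (@inA C d n) tau <-> irreducible_on (@whole C _) (@canon_ext C d n tau)) /\
  (forall r : C, spectral_radius_is (@inA C d n) tau r <->
                 spectral_radius_is (@whole C _) (@canon_ext C d n tau) r).
Proof.
move=> tauA tau_cp; split; first exact: irreducible_canon_ext (cp_on_A_pos tau_cp).
by move=> r; apply: spectral_radius_canon_ext.
Qed.
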